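(* Let $G=GL(\infty,F_2)\ltimes F_2^\infty$. For $g\in GL(\infty,F_2)$ let $f_g=\frac{1}{\#R(g-I)}\sum_{v\in R(g-I)}u_v\in L(F_2^\infty)$, where $R(g-I)$ is the (finite) range of $g-I$. Let $\mathcal M_{exo}$ be the von Neumann subalgebra of $L(G)$ generated by $L(F_2^\infty)$ together with the elements $u_gf_g$, $g\in GL(\infty,F_2)$. Then $\mathcal M_{exo}$ is a $G$-invariant von Neumann subalgebra of $L(G)$ which is not of the form $L(N)$ for any normal subgroup $N\trianglelefteq G$.
   Context: For a countable discrete group $G$, $L(G)$ is the group von Neumann algebra generated by the left regular unitaries $u_g$ on $\ell^2(G)$; for a subgroup $N$, $L(N)$ is the von Neumann subalgebra generated by $\{u_g:g\in N\}$. A von Neumann subalgebra $\mathcal M\subseteq L(G)$ is $G$-invariant if $u_g\mathcal M u_g^*\subseteq\mathcal M$ for all $g\in G$. $F_2$ is the field with two elements and $F_2^\infty=\bigoplus_{\mathbb N}F_2$ is the space of finitely supported column vectors, regarded as an abelian group under addition. $GL(\infty,F_2)$ is the group of invertible $\mathbb N\times\mathbb N$ matrices $M$ over $F_2$ with $M_{ij}\neq\delta_{ij}$ for only finitely many $(i,j)$, acting on $F_2^\infty$ by matrix multiplication; $I$ is the identity matrix. $G=GL(\infty,F_2)\ltimes F_2^\infty$ is the semidirect product with $gvg^{-1}=g(v)$. *)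

From HB Require Import structures.
From mathcomp Require Import all_boot all_order all_algebra finmap.
From mathcomp Require Import boolp reals.
From mathcomp.real_closed Require Import complex.

Set Implicit Arguments.
Unset Strict Implicit.
Unset Printing Implicit Defensive.
Import Order.TTheory GRing.Theory Num.Theory.

Local Open Scope fset_scope.

(* A finitely supported column vector v in F_2^oo is represented by its
   (finite) support { i | v_i = 1 }. *)
Definition vec := {fset nat}.

(* An N x N matrix M over F_2 with M_ij <> delta_ij for only finitely many
   (i,j) is represented by the finite set D of positions (i,j) where
   M_ij <> delta_ij, i.e. M = I + D (entrywise over F_2). *)
Definition mat := {fset (nat * nat)}.

(* symmetric difference = addition over F_2 *)
Definition symd (K : choiceType) (A B : {fset K}) : {fset K} :=
  (A `\` B) `|` (B `\` A).

(* (M - I) w = D w, computed entrywise: (D w)_i = sum_j D_ij w_j  (mod 2) *)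
Definition Dapply (D : mat) (w : vec) : vec :=
  [fset i in [fset p.1 | p in D] |
     odd (count (fun j => (i, j) \in D) (enum_fset w))].

(* M w = w + (M - I) w *)
Definition mapply (D : mat) (w : vec) : vec := symd w (Dapply D w).

Definition Dprod (D1 D2 : mat) : mat :=
  [fset ik in [fset (q.1, r.2) | q in D1, r in D2] |
     odd (count (fun j => ((ik.1, j) \in D1) && ((j, ik.2) \in D2))
                (enum_fset [fset p.2 | p in D1]))].

(* (I + D1)(I + D2) = I + (D1 + D2 + D1 D2) *)
Definition mprod (D1 D2 : mat) : mat := symd (symd D1 D2) (Dprod D1 D2).

(* raw pairs (M, v) ; the semidirect product law
   (M1, v1)(M2, v2) = (M1 M2, v1 + M1 v2) *)
Definition raw := (mat * vec)%type.
Definition rawmul (x y : raw) : raw := (mprod x.1 y.1, symd x.2 (mapply x.1 y.2)).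
Definition rawone : raw := (fset0, fset0).

(* M = I + D is invertible (its inverse is again I + D') *)
Definition isG (x : raw) : Prop :=
  exists D' : mat, mprod x.1 D' = fset0 /\ mprod D' x.1 = fset0.

Definition G := {x : raw | `[< isG x >]}.

Lemma isG_one : `[< isG rawone >].
Proof.
apply/asboolP; exists fset0.
suff -> : mprod fset0 fset0 = fset0 by [].
apply/fsetP => x; rewrite !inE /=.
by rewrite count_pred0 /= !andbF.
Qed.

Definition oneG : G := exist _ rawone isG_one.

Definition mulG (x y : G) : G :=
  match insub (rawmul (val x) (val y)) with Some z => z | None => oneG end.

Definition invG (x : G) : G :=
  match pselect (exists y, mulG x y = oneG /\ mulG y x = oneG) with
  | left H => projT1 (cid H)
  | right _ => oneG
  end.

Definition embV (v : vec) : G :=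
  match insub ((fset0, v) : raw) with Some z => z | None => oneG end.

Definition isGL (g : G) : bool := (val g).2 == fset0.

Definition in_range (g : G) (v : vec) : Prop := exists w : vec, v = Dapply (val g).1 w.

Definition normal_subgroup (N : G -> Prop) : Prop :=
  [/\ N oneG,
      (forall x y, N x -> N y -> N (mulG x y)),
      (forall x, N x -> N (invG x)) &
      (forall g n, N n -> N (mulG (mulG g n) (invG g)))].

Local Open Scope ring_scope.

(* elements of the complex group algebra C[G] as finite formal sums
   sum_k c_k g_k (lists of (coefficient, group element)) *)
Definition galg (R : realType) := seq (R[i] * G)%type.

Definition ug (R : realType) (g : G) : galg R := [:: (1, g)].
Arguments ug : clear implicits.

(* the operator of left multiplication by a on l^2(G):
   (lam a f)(x) = sum_k c_k f(g_k^-1 x); lam (ug g) is the left regular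
   unitary u_g *)
Definition lam (R : realType) (a : galg R) (f : G -> R[i]) : G -> R[i] :=
  fun x => \sum_(p <- a) p.1 * f (mulG (invG p.2) x).

Definition star (R : realType) (a : galg R) : galg R :=
  [seq (conjc p.1, invG p.2) | p <- a].

Definition gmul (R : realType) (a b : galg R) : galg R :=
  [seq (p.1 * q.1, mulG p.2 q.2) | p <- a, q <- b].

Definition sqsum (R : realType) (f : G -> R[i]) (s : seq G) : R[i] :=
  \sum_(x <- s) `|f x| ^+ 2.

Definition l2 (R : realType) (f : G -> R[i]) : Prop :=
  exists B : R[i], forall s, uniq s -> sqsum f s <= B.

Definition op (R : realType) := (G -> R[i]) -> (G -> R[i]).

Definition bounded (R : realType) (T : op R) : Prop :=
  (forall f g (c : R[i]), l2 f -> l2 g ->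
     T (fun x => c * f x + g x) =1 (fun x => c * T f x + T g x)) /\
  exists K : R[i], forall f, l2 f -> forall B : R[i],
     (forall s, uniq s -> sqsum f s <= B) ->
     forall s, uniq s -> sqsum (T f) s <= K * B.

Definition commute_l2 (R : realType) (A B : op R) : Prop :=
  forall f, l2 f -> A (B f) =1 B (A f).

Definition commutant (R : realType) (S : galg R -> Prop) (A : op R) : Prop :=
  bounded A /\
  forall a, S a -> commute_l2 A (lam a) /\ commute_l2 A (lam (star a)).

(* the von Neumann algebra generated by { lam a | S a } :
   the bicommutant of { lam a, (lam a)^* | S a } *)
Definition vNgen (R : realType) (S : galg R -> Prop) (T : op R) : Prop :=
  bounded T /\ forall A, commutant S A -> commute_l2 T A.

Definition LN (R : realType) (N : G -> Prop) : op R -> Prop :=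
  vNgen (fun a : galg R => exists n, N n /\ a = ug R n).
Arguments LN : clear implicits.

Definition LG (R : realType) : op R -> Prop := LN R (fun _ => True).
Arguments LG : clear implicits.

(* f_g = (1 / #R(g-I)) sum_{v in R(g-I)} u_v, given an enumeration s of R(g-I) *)
Definition fgal (R : realType) (s : seq vec) : galg R :=
  [seq (((size s)%:R)^-1, embV v) | v <- s].
Arguments fgal : clear implicits.

Definition Sexo (R : realType) (a : galg R) : Prop :=
  (exists v : vec, a = ug R (embV v)) \/
  (exists (g : G) (s : seq vec),
     [/\ isGL g, uniq s, (forall v, v \in s <-> in_range g v) &
         a = gmul (ug R g) (fgal R s)]).

Definition Mexo (R : realType) : op R -> Prop := vNgen (@Sexo R).

From HB Require Import structures.
From mathcomp Require Import all_boot all_order all_algebra finmap.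
From mathcomp Require Import boolp reals ring.
From mathcomp.real_closed Require Import complex.
Import Order.TTheory GRing.Theory Num.Theory.
Local Open Scope fset_scope.

(* Conjugation by x in G maps a generator u_h f_h (h in GL) to u_h' u_c f'
   where h' is the linear part of h^x, c lies in R(h' - I) and f' averages u_v
   over x^-1 R(h - I) = R(h' - I); as R(h' - I) is a group, u_c f' = f_h', so
   the generators are permuted and M_exo is G-invariant.  In particular
   conjugation by u_v (v in F_2^oo) fixes every generator, so L(F_2^oo) lies in
   the commutant of M_exo.  If M_exo were L(N), each n in N would then commute
   with F_2^oo, i.e. have trivial linear part; multiplication by the indicator
   of F_2^oo would commute with L(N), but not with u_g f_g for the transvection
   g = I + E_01. *)

(** * Linear algebra over F_2 on finite supports *)

Section Parity.
Variable T : Type.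

Lemma odd_count_addb (p q : pred T) s :
  odd (count (fun x => p x (+) q x) s) = odd (count p s) (+) odd (count q s).
Proof.
elim: s => //= x s IH; rewrite !oddD IH.
by case: (p x); case: (q x); case: (odd (count p s)); case: (odd (count q s)).
Qed.

Lemma odd_count_andl b (p : pred T) s :
  odd (count (fun x => b && p x) s) = b && odd (count p s).
Proof. by case: b => //=; rewrite count_pred0. Qed.

Lemma odd_count_exchange (U : Type) (f : T -> U -> bool) s1 s2 :
  odd (count (fun k => odd (count (fun j => f j k) s1)) s2) =
  odd (count (fun j => odd (count (fun k => f j k) s2)) s1).
Proof.
elim: s2 => /= [|k s2 IH]; first by rewrite count_pred0.
rewrite oddD oddb IH -odd_count_addb; congr (odd _).
by apply: eq_count => j /=; rewrite oddD oddb.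
Qed.

End Parity.

Lemma odd_count_enum_fsub {K : choiceType} {w W : {fset K}} (P : pred K) :
  w `<=` W ->
  odd (count P (enum_fset w)) = odd (count (fun j => P j && (j \in w)) (enum_fset W)).
Proof.
move=> /fsubsetP sub; congr (odd _); rewrite -count_filter.
apply/permP/uniq_perm; rewrite ?filter_uniq ?fset_uniq // => x.
by rewrite mem_filter; case xw: (x \in w) => //=; rewrite (sub _ xw).
Qed.

Lemma in_symd {K : choiceType} (A B : {fset K}) x :
  (x \in symd A B) = (x \in A) (+) (x \in B).
Proof. by rewrite /symd !inE; case: (x \in A); case: (x \in B). Qed.

Ltac symd_solve :=
  apply/fsetP => ?; rewrite ?in_symd ?in_fset0;
  do 8 try (match goal with |- context [?x \in ?A] => case: (x \in A) end).

Section SymmetricDifference.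
Context {K : choiceType}.
Implicit Types A B C : {fset K}.

Lemma symdC A B : symd A B = symd B A.          Proof. by symd_solve. Qed.
Lemma symd0 A : symd A fset0 = A.               Proof. by symd_solve. Qed.
Lemma sym0d A : symd fset0 A = A.               Proof. by symd_solve. Qed.
Lemma symdd A : symd A A = fset0.               Proof. by symd_solve. Qed.
Lemma symdK A B : symd A (symd A B) = B.        Proof. by symd_solve. Qed.

Lemma symd_inj A : injective (symd A).
Proof. by move=> B C E; rewrite -(symdK A B) E symdK. Qed.

Lemma symd_eq0 A B : symd A B = fset0 -> A = B.
Proof. by move=> E; apply: (symd_inj A); rewrite E symdd. Qed.

End SymmetricDifference.

Section Matrices.
Implicit Types (D E : mat) (v w : vec).

Lemma in_Dapply D w i :
  (i \in Dapply D w) = odd (count (fun j => (i, j) \in D) (enum_fset w)).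
Proof.
rewrite /Dapply !inE /=; case od: (odd _); rewrite ?andbF ?andbT //.
have /hasP [j _ ij] : has (fun j => (i, j) \in D) (enum_fset w).
  by rewrite has_count; move: od; case: count.
by apply/imfsetP; exists (i, j).
Qed.

Lemma in_Dprod D E i k :
  ((i, k) \in Dprod D E) = odd (count (fun j => ((i, j) \in D) && ((j, k) \in E))
                                       (enum_fset [fset p.2 | p in D])).
Proof.
rewrite /Dprod !inE /=; case od: (odd _); rewrite ?andbF ?andbT //.
have /hasP [j _ /andP [ij jk]] :
    has (fun j => ((i, j) \in D) && ((j, k) \in E)) (enum_fset [fset p.2 | p in D]).
  by rewrite has_count; move: od; case: count.
by apply/imfset2P; exists (i, j) => //; exists (j, k).
Qed.

Lemma DapplyDr D v w : Dapply D (symd v w) = symd (Dapply D v) (Dapply D w).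
Proof.
apply/fsetP => i; rewrite in_symd !in_Dapply.
have sub_vw : symd v w `<=` v `|` w.
  by apply/fsubsetP => x; rewrite in_symd inE; case: (x \in v); case: (x \in w).
rewrite (odd_count_enum_fsub _ (fsubsetUl v w)).
rewrite (odd_count_enum_fsub _ (fsubsetUr v w)) (odd_count_enum_fsub _ sub_vw).
rewrite -odd_count_addb; congr (odd _); apply: eq_count => j.
by rewrite in_symd; case: ((i, j) \in D); case: (j \in v); case: (j \in w).
Qed.

Lemma DapplyDl D E w : Dapply (symd D E) w = symd (Dapply D w) (Dapply E w).
Proof.
apply/fsetP => i; rewrite in_symd !in_Dapply -odd_count_addb.
by congr (odd _); apply: eq_count => j; rewrite in_symd.
Qed.

Lemma DapplyM D E w : Dapply (Dprod D E) w = Dapply D (Dapply E w).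
Proof.
apply/fsetP => i; rewrite !in_Dapply.
set S := [fset p.2 | p in D] `|` Dapply E w.
rewrite (odd_count_enum_fsub _ (fsubsetUr _ _ : Dapply E w `<=` S)).
transitivity (odd (count (fun j => odd (count (fun k =>
                ((i, j) \in D) && ((j, k) \in E)) (enum_fset w))) (enum_fset S))).
  rewrite -odd_count_exchange; congr (odd _); apply: eq_count => k /=.
  rewrite in_Dprod (odd_count_enum_fsub _ (fsubsetUl _ _ : _ `<=` S)).
  congr (odd _); apply: eq_count => j /=; case ij: ((i, j) \in D) => //=.
  by rewrite [X in _ && X](_ : _ = true) ?andbT //; apply/imfsetP; exists (i, j).
by congr (odd _); apply: eq_count => j /=; rewrite odd_count_andl in_Dapply.
Qed.

Lemma in_Dapply1 D i j : (i \in Dapply D [fset j]) = ((i, j) \in D).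
Proof. by rewrite in_Dapply -fset_seq1 /= addn0 oddb. Qed.

Lemma Dapply0l w : Dapply fset0 w = fset0.
Proof. by apply/fsetP => i; rewrite in_Dapply inE count_pred0. Qed.

Lemma Dapply0r D : Dapply D fset0 = fset0.
Proof. by apply/fsetP => i; rewrite in_Dapply inE. Qed.

Lemma Dapply_ext D E : (forall w, Dapply D w = Dapply E w) -> D = E.
Proof. by move=> DE; apply/fsetP => -[i j]; rewrite -!in_Dapply1 DE. Qed.

Lemma mapplyD D v w : mapply D (symd v w) = symd (mapply D v) (mapply D w).
Proof. by rewrite /mapply DapplyDr; symd_solve. Qed.

Lemma mapply0l w : mapply fset0 w = w.
Proof. by rewrite /mapply Dapply0l symd0. Qed.

Lemma mapply0r D : mapply D fset0 = fset0.
Proof. by rewrite /mapply Dapply0r symd0. Qed.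

Lemma mapplyM D E w : mapply (mprod D E) w = mapply D (mapply E w).
Proof. by rewrite /mapply /mprod !DapplyDl DapplyM DapplyDr; symd_solve. Qed.

Lemma mapply_ext D E : (forall w, mapply D w = mapply E w) -> D = E.
Proof. by move=> DE; apply: Dapply_ext => w; apply: symd_inj (DE w). Qed.

Lemma mprod_eq0 D E : mprod D E = fset0 <-> forall w, mapply D (mapply E w) = w.
Proof.
split=> [DE w | DE]; first by rewrite -mapplyM DE mapply0l.
by apply: mapply_ext => w; rewrite mapplyM DE mapply0l.
Qed.

End Matrices.

(** * The group G = GL(oo, F_2) |x F_2^oo *)

Lemma mprodA : associative mprod.
Proof. by move=> D E F; apply: mapply_ext => w; rewrite !mapplyM. Qed.

Lemma mprod0l : left_id fset0 mprod.
Proof. by move=> D; apply: mapply_ext => w; rewrite mapplyM mapply0l. Qed.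

Lemma mprod0r : right_id fset0 mprod.
Proof. by move=> D; apply: mapply_ext => w; rewrite mapplyM mapply0l. Qed.

Lemma rawmulA : associative rawmul.
Proof.
move=> x y z; rewrite /rawmul /= mprodA mapplyD mapplyM.
by congr pair; symd_solve.
Qed.

Lemma rawmul1l : left_id rawone rawmul.
Proof. by case=> D v; rewrite /rawmul /= mprod0l mapply0l sym0d. Qed.

Lemma rawmul1r : right_id rawone rawmul.
Proof. by case=> D v; rewrite /rawmul /= mprod0r mapply0r symd0. Qed.

Lemma isG_rawmul (x y : raw) : isG x -> isG y -> isG (rawmul x y).
Proof.
move=> [Dx [/mprod_eq0 Dx1 /mprod_eq0 Dx2]] [Dy [/mprod_eq0 Dy1 /mprod_eq0 Dy2]].
exists (mprod Dy Dx); split; apply/mprod_eq0 => w /=.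
  by rewrite (mapplyM x.1) (mapplyM Dy) Dy1 Dx1.
by rewrite (mapplyM Dy) (mapplyM x.1) Dx2 Dy2.
Qed.

Lemma isG_rawinv (x : raw) :
  isG x -> exists2 y, isG y & rawmul x y = rawone /\ rawmul y x = rawone.
Proof.
move=> [D [xD Dx]]; exists (D, mapply D x.2); first by exists x.1.
rewrite /rawmul /= xD Dx -mapplyM xD mapply0l symdd.
by rewrite -(mapply0r D) -mapplyD symdd mapply0r.
Qed.

(* The group law of G is locked so that conversion never unfolds it into the
   underlying finite-set computations. *)
Fact G_key : unit. Proof. by []. Qed.
Definition Gmul := locked_with G_key mulG.
Definition Ginv := locked_with G_key invG.

Lemma GmulE : Gmul = mulG. Proof. by rewrite /Gmul unlock. Qed.
Lemma GinvE : Ginv = invG. Proof. by rewrite /Ginv unlock. Qed.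

Lemma val_Gmul x y : val (Gmul x y) = rawmul (val x) (val y).
Proof.
have xyG : `[< isG (rawmul (val x) (val y)) >].
  by apply/asboolP/isG_rawmul; apply/asboolP; [exact: (valP x) | exact: (valP y)].
by rewrite GmulE /mulG (insubT (fun r : raw => `[< isG r >]) xyG) SubK.
Qed.

Lemma GmulA : associative Gmul.
Proof. by move=> x y z; apply: val_inj; rewrite !val_Gmul rawmulA. Qed.

Lemma Gmul1g : left_id oneG Gmul.
Proof. by move=> x; apply: val_inj; rewrite val_Gmul rawmul1l. Qed.

Lemma Gmulg1 : right_id oneG Gmul.
Proof. by move=> x; apply: val_inj; rewrite val_Gmul rawmul1r. Qed.

Lemma invG_spec x : mulG x (invG x) = oneG /\ mulG (invG x) x = oneG.
Proof.
rewrite /invG; case: pselect => [xV | []]; first exact: (projT2 (cid xV)).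
have /isG_rawinv [y /asboolP yG [xy yx]] : isG (val x) by apply/asboolP; exact: (valP x).
exists (exist (fun r : raw => `[< isG r >]) _ yG); rewrite -GmulE.
by split; apply: val_inj; rewrite val_Gmul.
Qed.

Lemma GmulgV : right_inverse oneG Ginv Gmul.
Proof. by move=> x; rewrite GinvE GmulE; case: (invG_spec x). Qed.

Lemma GmulVg : left_inverse oneG Ginv Gmul.
Proof. by move=> x; rewrite GinvE GmulE; case: (invG_spec x). Qed.

HB.instance Definition _ := [Choice of G by <:].
HB.instance Definition _ := isGroup.Build G GmulA Gmul1g Gmulg1 GmulVg GmulgV.

Local Open Scope group_scope.

Lemma mulGE x y : mulG x y = x * y. Proof. by rewrite -GmulE. Qed.
Lemma invGE x : invG x = x^-1. Proof. by rewrite -GinvE. Qed.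

Definition linG := locked_with G_key (fun (x : G) (w : vec) => mapply (val x).1 w).
Definition vecG := locked_with G_key (fun x : G => (val x).2).

Lemma linGE x w : linG x w = mapply (val x).1 w. Proof. by rewrite /linG unlock. Qed.
Lemma vecGE x : vecG x = (val x).2. Proof. by rewrite /vecG unlock. Qed.

Lemma linGM x y w : linG (x * y) w = linG x (linG y w).
Proof. by rewrite !linGE val_Gmul mapplyM. Qed.

Lemma vecGM x y : vecG (x * y) = symd (vecG x) (linG x (vecG y)).
Proof. by rewrite !vecGE linGE val_Gmul. Qed.

Lemma linGD x v w : linG x (symd v w) = symd (linG x v) (linG x w).
Proof. by rewrite !linGE mapplyD. Qed.

Lemma linG0 x : linG x fset0 = fset0.
Proof. by rewrite linGE mapply0r. Qed.

Lemma linG1 w : linG 1 w = w.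
Proof. by rewrite linGE mapply0l. Qed.

Lemma vecG1 : vecG 1 = fset0.
Proof. by rewrite vecGE. Qed.

Lemma G_ext x y : (forall w, linG x w = linG y w) -> vecG x = vecG y -> x = y.
Proof.
move=> xy1; rewrite !vecGE => xy2; apply: val_inj.
have : (val x).1 = (val y).1 by apply: mapply_ext => w; rewrite -!linGE.
by move: xy2; case: (val x) (val y) => [a b] [c d] /= -> ->.
Qed.

Lemma linGK x w : linG x (linG x^-1 w) = w.
Proof. by rewrite -linGM mulgV linG1. Qed.

Lemma linGVK x w : linG x^-1 (linG x w) = w.
Proof. by rewrite -linGM mulVg linG1. Qed.

Lemma linG_inj x : injective (linG x).
Proof. exact: can_inj (linGVK x). Qed.

Lemma vecGV x : vecG x^-1 = linG x^-1 (vecG x).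
Proof. by apply: symd_eq0; rewrite -vecGM mulVg vecG1. Qed.

Lemma val_embV v : val (embV v) = (fset0, v).
Proof.
have vG : `[< isG ((fset0, v) : raw) >] by exact: isG_one.
by rewrite /embV (insubT (fun r : raw => `[< isG r >]) vG) SubK.
Qed.

Lemma linG_embV v w : linG (embV v) w = w.
Proof. by rewrite linGE val_embV mapply0l. Qed.

Lemma vecG_embV v : vecG (embV v) = v.
Proof. by rewrite vecGE val_embV. Qed.

Lemma embV0 : embV fset0 = 1.
Proof. by apply: G_ext => [w|]; rewrite ?linG_embV ?linG1 ?vecG_embV ?vecG1. Qed.

Lemma embV_eq1 v : (embV v == 1) = (v == fset0).
Proof.
apply/eqP/eqP => [/(congr1 vecG) | ->]; last exact: embV0.
by rewrite vecG_embV vecG1.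
Qed.

Lemma invG_embV v : (embV v)^-1 = embV v.
Proof.
apply: mulg1_eq; apply: G_ext => [w|]; first by rewrite linGM !linG_embV linG1.
by rewrite vecGM linG_embV vecG_embV symdd vecG1.
Qed.

Lemma conjg_embV v g : embV v ^ g = embV (linG g^-1 v).
Proof.
rewrite conjgE; apply: G_ext => [w|]; first by rewrite !linGM linG_embV linGVK linG_embV.
by rewrite !vecGM linG_embV !vecG_embV vecGV !linGD; symd_solve.
Qed.

Lemma in_rangeE x v : in_range x v <-> exists z, v = symd z (linG x z).
Proof. by split=> -[z ->]; exists z; rewrite linGE /mapply symdK. Qed.

Lemma in_range_symd x v w :
  in_range x v -> in_range x w -> in_range x (symd v w).
Proof.
move=> /in_rangeE [z1 ->] /in_rangeE [z2 ->]; apply/in_rangeE.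
by exists (symd z1 z2); rewrite linGD; symd_solve.
Qed.

Lemma in_range_conjg x g v : in_range (x ^ g) v <-> in_range x (linG g v).
Proof.
rewrite !in_rangeE; split=> -[z vz].
  by exists (linG g z); rewrite vz conjgE linGD !linGM linGK.
by exists (linG g^-1 z); rewrite -[v](linGVK g) vz conjgE linGD !linGM !linGK.
Qed.

Lemma isGLE g : isGL g = (vecG g == fset0).
Proof. by rewrite /isGL vecGE. Qed.

Lemma isG_linpart (x : G) : `[< isG ((val x).1, fset0) >].
Proof. by apply/asboolP; case/asboolP: (valP x) => D xD; exists D. Qed.

Definition linpart (x : G) : G := exist (fun r : raw => `[< isG r >]) _ (isG_linpart x).

Lemma linG_linpart x w : linG (linpart x) w = linG x w.
Proof. by rewrite !linGE. Qed.

Lemma vecG_linpart x : vecG (linpart x) = fset0.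
Proof. by rewrite vecGE. Qed.

Lemma in_range_linpart x v : in_range (linpart x) v <-> in_range x v.
Proof. by []. Qed.

Lemma conjg_mul_embV h g : vecG h = fset0 ->
  exists2 c, in_range (h ^ g) c &
    forall w, (h * embV w) ^ g = linpart (h ^ g) * embV (symd c (linG g^-1 w)).
Proof.
move=> h0; set u := vecG g.
exists (linG g^-1 (symd (linG h^-1 u) u)).
  apply/in_range_conjg; rewrite linGK; apply/in_rangeE; exists (linG h^-1 u).
  by rewrite linGK symdC.
move=> w; apply: G_ext => [y|].
  by rewrite linGM linG_linpart linG_embV !conjgE !linGM linG_embV.
rewrite conjgE !vecGM !linGM linG_embV vecG_linpart vecG_embV linG_linpart h0.
rewrite vecG_embV conjgE !linGM vecGV -/u !linGD !linGK linG0; by symd_solve.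
Qed.

Lemma conjg_mul_embV_embV h v : vecG h = fset0 ->
  exists2 t, in_range h t & forall w, (h * embV w) ^ embV v = h * embV (symd t w).
Proof.
move=> h0; have [c hc conjE] := conjg_mul_embV h (embV v) h0.
have linE y : linG (h ^ embV v) y = linG h y.
  by rewrite conjgE !linGM invG_embV !linG_embV.
have hE : linpart (h ^ embV v) = h.
  by apply: G_ext => [y|]; rewrite ?linG_linpart ?linE // vecG_linpart h0.
exists c => [|w]; last by rewrite conjE hE invG_embV linG_embV.
by move: hc; rewrite !in_rangeE => -[z ->]; exists z; rewrite linE.
Qed.

Lemma perm_eq_range_shift {x : G} {s : seq vec} {t : vec} :
  uniq s -> (forall v, v \in s <-> in_range x v) -> in_range x t ->
  perm_eq (map (symd t) s) s.
Proof.
move=> us sx xt; apply: uniq_perm => //; first by rewrite map_inj_uniq //; apply: symd_inj.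
move=> v; apply/mapP/idP => [[w /sx xw ->] | /sx xv].
  by apply/sx/in_range_symd.
by exists (symd t v); [apply/sx/in_range_symd | rewrite symdK].
Qed.

(* g01 = I + E_01 is the transvection e_1 |-> e_0 + e_1, and R(g01 - I) = {0, e_0}. *)
Definition D01 : mat := [fset (0%N, 1%N)].

Lemma in_Dapply_D01 w i : (i \in Dapply D01 w) = (i == 0%N) && (1%N \in w).
Proof.
rewrite in_Dapply (eq_count (a2 := fun j => (i == 0%N) && (j == 1%N))); last first.
  by move=> j; rewrite !inE xpair_eqE.
by rewrite odd_count_andl count_uniq_mem ?fset_uniq //; case: (1%N \in enum_fset w).
Qed.

Lemma isG_D01 : `[< isG ((D01, fset0) : raw) >].
Proof.
apply/asboolP; exists D01; split; apply/mprod_eq0 => w; apply/fsetP => i.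
all: rewrite /mapply !in_symd !in_Dapply_D01 !in_symd !in_Dapply_D01 /=.
all: by case: (i == 0%N); case: (1%N \in w); case: (i \in w).
Qed.

Definition g01 : G := exist (fun r : raw => `[< isG r >]) _ isG_D01.
Definition range_g01 : seq vec := [:: fset0; [fset 0%N]].

Lemma range_g01P v : v \in range_g01 <-> in_range g01 v.
Proof.
split.
  rewrite !inE => /orP [/eqP -> | /eqP ->]; first by exists fset0; rewrite Dapply0r.
  by exists [fset 1%N]; apply/fsetP => i; rewrite in_Dapply_D01 !inE andbT.
move=> [w ->]; rewrite !inE /=; case w1: (1%N \in w).
  by apply/orP; right; apply/eqP/fsetP => i; rewrite in_Dapply_D01 w1 !inE andbT.
by apply/orP; left; apply/eqP/fsetP => i; rewrite in_Dapply_D01 w1 !inE andbF.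
Qed.

Lemma uniq_range_g01 : uniq range_g01.
Proof. by rewrite /= andbT inE; apply/eqP => /fsetP /(_ 0%N); rewrite !inE. Qed.

Lemma isGL_g01 : isGL g01.
Proof. by []. Qed.

Definition inV (x : G) : bool := (val x).1 == fset0.

Lemma inV_g01 : inV g01 = false.
Proof. by apply/eqP => /fsetP /(_ (0%N, 1%N)); rewrite !inE. Qed.

Lemma inV_embV v : inV (embV v).
Proof. by rewrite /inV val_embV. Qed.

Lemma inV_mull n x : (forall w, linG n w = w) -> inV (n * x) = inV x.
Proof.
move=> n1; have /(mapply_ext) n0 : forall w, mapply (val n).1 w = mapply fset0 w.
  by move=> w; rewrite mapply0l -linGE n1.
by rewrite /inV val_Gmul /= n0 mprod0l.
Qed.

Lemma centralizes_embV_linG n :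
  (forall w, commute n (embV w)) -> forall w, linG n w = w.
Proof.
move=> nV w; have /(congr1 vecG) := nV w.
rewrite !vecGM vecG_embV linG_embV => E.
by apply: (symd_inj (vecG n)); rewrite E symdC.
Qed.

(** * Operators on l^2(G) *)

Local Close Scope group_scope.
Local Open Scope ring_scope.

Section Operators.
Variable R : realType.
Local Notation C := R[i].
Implicit Types (S : galg R -> Prop) (a b : galg R) (f : G -> C) (A T : op R).

Lemma lamE a f x : lam a f x = \sum_(p <- a) p.1 * f (p.2^-1 * x)%g.
Proof. by apply: eq_bigr => p _; rewrite mulGE invGE. Qed.

Lemma lam_ug g f : lam (ug R g) f = fun x => f (g^-1 * x)%g.
Proof. by apply: funext => x; rewrite lamE big_seq1 mul1r. Qed.

Lemma lam_nil f : lam [::] f = fun _ => 0.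
Proof. by apply: funext => x; rewrite /lam big_nil. Qed.

Lemma lam_cons p a f :
  lam (p :: a) f = fun x => p.1 * lam (ug R p.2) f x + lam a f x.
Proof. by apply: funext => x; rewrite /lam big_cons big_seq1 mul1r. Qed.

Lemma lam_linear a (f f' : G -> C) c :
  lam a (fun x => c * f x + f' x) = fun x => c * lam a f x + lam a f' x.
Proof.
apply: funext => x; rewrite /lam mulr_sumr -big_split /=.
by apply: eq_bigr => p _; ring.
Qed.

Lemma normD_sqr_le (x y : C) : `|x + y| ^+ 2 <= 2 * `|x| ^+ 2 + 2 * `|y| ^+ 2.
Proof.
rewrite !sqr_normc -subr_ge0.
have -> : 2 * (x * x^*%C) + 2 * (y * y^*%C) - (x + y) * (x + y)^*%C
   = (x - y) * (x - y)^*%C by rewrite !rmorphD !rmorphN /=; ring.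
exact: mulcJ_ge0.
Qed.

Lemma sqsum_linear_le (f f' : G -> C) c s :
  sqsum (fun x => c * f x + f' x) s <= 2 * `|c| ^+ 2 * sqsum f s + 2 * sqsum f' s.
Proof.
rewrite /sqsum mulr_sumr mulr_sumr -big_split /=; apply: ler_sum => x _.
by apply: le_trans (normD_sqr_le _ _) _; rewrite normrM exprMn mulrA.
Qed.

Lemma sqsum_translate f g s :
  sqsum (fun x => f (g * x)%g) s = sqsum f [seq (g * x)%g | x <- s].
Proof. by rewrite /sqsum big_map. Qed.

Lemma l2_translate f g : l2 f -> l2 (fun x => f (g * x)%g).
Proof.
move=> [B fB]; exists B => s us; rewrite sqsum_translate; apply: fB.
by rewrite map_inj_uniq //; apply: mulgI.
Qed.

Lemma l2_linear (f f' : G -> C) c : l2 f -> l2 f' -> l2 (fun x => c * f x + f' x).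
Proof.
move=> [B1 fB1] [B2 fB2]; exists (2 * `|c| ^+ 2 * B1 + 2 * B2) => s us.
apply: le_trans (sqsum_linear_le _ _ _ _) _; apply: lerD.
  by apply: ler_wpM2l; [rewrite mulr_ge0 // exprn_ge0 | exact: fB1].
by apply: ler_wpM2l => //; exact: fB2.
Qed.

Lemma l2_0 : l2 (fun _ : G => (0 : C)).
Proof. by exists 0 => s _; rewrite /sqsum big1 // => x _; rewrite normr0 expr0n. Qed.

Lemma l2_lam a f : l2 f -> l2 (lam a f).
Proof.
move=> lf; elim: a => [|p a IH]; first by rewrite lam_nil; exact: l2_0.
by rewrite lam_cons; apply: l2_linear => //; rewrite lam_ug; exact: l2_translate.
Qed.

Lemma l2_delta y : l2 (fun x => ((x == y)%:R : C)).
Proof.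
exists 1 => s us; rewrite /sqsum.
have -> : \sum_(x <- s) `|((x == y)%:R : C)| ^+ 2 = (\sum_(x <- s) (x == y))%:R.
  rewrite natr_sum; apply: eq_bigr => x _.
  by case: (x == y); rewrite ?normr1 ?normr0 ?expr1n ?expr0n.
have -> : (\sum_(x <- s) (x == y))%N = count_mem y s.
  by elim: s {us} => [|x s IH]; rewrite ?big_nil ?big_cons //= IH.
by rewrite count_uniq_mem //; case: (y \in s); rewrite ?ler01 ?lexx.
Qed.

Lemma bounded_lam a : bounded (lam a).
Proof.
split=> [f h c _ _|]; first by rewrite lam_linear.
elim: a => [|p a [K IH]].
  exists 0 => f _ B _ s _; rewrite lam_nil mul0r /sqsum big1 // => x _.
  by rewrite normr0 expr0n.
exists (2 * `|p.1| ^+ 2 + 2 * K) => f lf B fB s us.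
rewrite lam_cons; apply: le_trans (sqsum_linear_le _ _ _ _) _.
rewrite (_ : _ * B = 2 * `|p.1| ^+ 2 * B + 2 * (K * B)); last by ring.
apply: lerD.
  apply: ler_wpM2l; first by rewrite mulr_ge0 // exprn_ge0.
  by rewrite lam_ug sqsum_translate; apply: fB; rewrite map_inj_uniq //; apply: mulgI.
by apply: ler_wpM2l => //; exact: IH.
Qed.

Lemma vNgen_lam S a : S a -> vNgen S (lam a).
Proof.
move=> Sa; split=> [|A [_ AS] f lf x]; first exact: bounded_lam.
by symmetry; apply: (AS a Sa).1.
Qed.

Lemma commute_lam A : bounded A ->
  (forall g, commute_l2 A (lam (ug R g))) -> forall a, commute_l2 A (lam a).
Proof.
move=> [Alin _] Aug; elim=> [|p a IH] f lf x.
  have := Alin (fun _ => 0) (fun _ => 0) (-1) l2_0 l2_0 x.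
  have -> : (fun _ : G => -1 * 0 + 0 : C) = (fun _ => 0).
    by apply: funext => y; rewrite mulr0 addr0.
  by rewrite !lam_nil => ->; rewrite mulN1r addNr.
rewrite (lam_cons p a f) (lam_cons p a (A f)).
by rewrite (Alin _ _ _ (l2_lam _ _ lf) (l2_lam _ _ lf) x) (Aug _ _ lf x) (IH f lf x).
Qed.

Lemma vNgen_LG S T : vNgen S T -> LG R T.
Proof.
move=> [bT TS]; split=> // A [bA AG]; apply: TS; split=> // a _.
have Aug g : commute_l2 A (lam (ug R g)) by apply: (AG (ug R g) _).1; exists g.
by split; apply: commute_lam.
Qed.

(* lam (conjl g a) = u_g^* (lam a) u_g *)
Definition conjl g a : galg R := [seq (p.1, (p.2 ^ g)%g) | p <- a].

Lemma star_conjl g a : star (conjl g a) = conjl g (star a).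
Proof.
by rewrite /star /conjl -!map_comp; apply: eq_map => p /=; rewrite !invGE conjVg.
Qed.

Lemma conjlKV g a : conjl g (conjl g^-1%g a) = a.
Proof.
by rewrite /conjl -map_comp -[RHS]map_id; apply: eq_map => -[c x] /=; rewrite conjgKV.
Qed.

Lemma lam_ug_lam g a f : lam (ug R g) (lam a f) = lam (conjl g^-1%g a) (lam (ug R g) f).
Proof.
apply: funext => x; rewrite lam_ug !lamE big_map; apply: eq_bigr => p _.
by rewrite lam_ug /= conjgE invgK !invgM invgK !mulgA mulVg mul1g.
Qed.

Lemma star_ug g : star (ug R g) = ug R g^-1%g.
Proof. by rewrite -invGE; congr [:: (_, _)]; apply: conjc1. Qed.

Lemma lam_ugK g f : lam (ug R g) (lam (ug R g^-1%g) f) = f.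
Proof. by rewrite !lam_ug; apply: funext => x; rewrite invgK mulVKg. Qed.

Lemma lam_perm a b : perm_eq a b -> lam a = lam b.
Proof. by move=> ab; apply: funext => f; apply: funext => x; apply: perm_big. Qed.

Lemma commute_ug_conjl_perm g a :
  perm_eq (conjl g^-1%g a) a -> commute_l2 (lam (ug R g)) (lam a).
Proof. by move=> /lam_perm ga f _ x; rewrite lam_ug_lam ga. Qed.

Lemma bounded_conj A (g h : G) : bounded A ->
  bounded (fun f => lam (ug R g) (A (lam (ug R h) f))).
Proof.
move=> [Alin [K AK]]; split.
  move=> f1 f2 c l1 l2 x; rewrite !lam_ug /=.
  by apply: Alin; apply: l2_translate.
exists K => f lf B fB s us; rewrite (lam_ug g) sqsum_translate; apply: AK.
- by rewrite lam_ug; apply: l2_translate.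
- move=> s' us'; rewrite lam_ug sqsum_translate; apply: fB.
  by rewrite map_inj_uniq //; apply: mulgI.
- by rewrite map_inj_uniq //; apply: mulgI.
Qed.

Lemma commute_conj A g a : commute_l2 A (lam (conjl g^-1%g a)) ->
  commute_l2 (fun f => lam (ug R g^-1%g) (A (lam (ug R g) f))) (lam a).
Proof.
move=> Aa f lf x /=.
have lgf : l2 (lam (ug R g) f) by rewrite lam_ug; apply: l2_translate.
by rewrite lam_ug_lam (funext (Aa _ lgf)) lam_ug_lam invgK conjlKV.
Qed.

Lemma vNgen_conj S g T :
  (forall a, S a -> S (conjl g^-1%g a)) -> vNgen S T ->
  vNgen S (fun f => lam (ug R g) (T (lam (ug R g^-1%g) f))).
Proof.
move=> Sconj [bT TS]; split=> [|A [bA AS] f lf x]; first exact: bounded_conj.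
pose B f := lam (ug R g^-1%g) (A (lam (ug R g) f)).
have cB : commutant S B.
  split=> [|a Sa]; first exact: bounded_conj.
  have [Aa Aa'] := AS _ (Sconj a Sa).
  by split; apply: commute_conj; rewrite // -star_conjl.
have lf' : l2 (lam (ug R g^-1%g) f) by rewrite lam_ug; apply: l2_translate.
have -> : lam (ug R g^-1%g) (A f) = B (lam (ug R g^-1%g) f).
  by rewrite /B lam_ugK.
by rewrite (funext (TS B cB _ lf')) /B lam_ugK.
Qed.

Lemma gmul_ug_fgal h s :
  gmul (ug R h) (fgal R s) = [seq ((size s)%:R^-1, (h * embV v)%g) | v <- s].
Proof.
by rewrite /gmul /fgal /= cats0 -map_comp; apply: eq_map => v /=; rewrite mul1r mulGE.
Qed.

(** * The algebra M_exo *)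

Lemma Sexo_conjl g a : Sexo a -> Sexo (conjl g a).
Proof.
case=> [[v ->] | [h [s [hGL us sh ->]]]].
  by left; exists (linG g^-1%g v); rewrite /conjl /= conjg_embV.
move: hGL; rewrite isGLE => /eqP /(conjg_mul_embV h g) [c hc conjE].
pose phi w := symd c (linG g^-1%g w).
right; exists (linpart (h ^ g)%g), (map phi s); split.
- by rewrite isGLE vecG_linpart.
- by rewrite map_inj_uniq // => w1 w2 /symd_inj /linG_inj.
- move=> v; rewrite in_range_linpart; split.
    move=> /mapP [w /sh hw ->]; apply: in_range_symd => //.
    by apply/in_range_conjg; rewrite linGK.
  move=> hv; apply/mapP; exists (linG g (symd c v)); last by rewrite /phi linGVK symdK.
  by apply/sh/(in_range_conjg h g); apply: in_range_symd hc hv.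
- rewrite !gmul_ug_fgal /conjl -map_comp size_map -map_comp.
  by apply: eq_map => w /=; rewrite conjE.
Qed.

Lemma Mexo_conj g T : Mexo T ->
  Mexo (fun f => lam (ug R g) (T (lam (ug R (invG g)) f))).
Proof. by rewrite invGE; apply: vNgen_conj => a; apply: Sexo_conjl. Qed.

Lemma commutant_of_conjl_perm S g :
  (forall a, S a -> perm_eq (conjl g^-1%g a) a) -> commutant S (lam (ug R g)).
Proof.
move=> gS; split=> [|a Sa]; first exact: bounded_lam.
split; apply: commute_ug_conjl_perm; first exact: gS.
by rewrite -star_conjl; apply: perm_map; apply: gS.
Qed.

Lemma commutant_Sexo_embV w : commutant (@Sexo R) (lam (ug R (embV w))).
Proof.
apply: commutant_of_conjl_perm => a; rewrite invG_embV.
case=> [[v ->] | [h [s [hGL us sh ->]]]].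
  by rewrite /conjl /= conjg_embV invG_embV linG_embV.
move: hGL; rewrite isGLE => /eqP /(conjg_mul_embV_embV h w) [t ht conjE].
rewrite gmul_ug_fgal /conjl -map_comp.
rewrite (eq_map (g := (fun v => ((size s)%:R^-1, (h * embV v)%g)) \o symd t)); last first.
  by move=> v /=; rewrite conjE.
by rewrite map_comp perm_map // (perm_eq_range_shift us sh ht).
Qed.

Lemma commute_of_commute_l2_ug n m :
  commute_l2 (lam (ug R n)) (lam (ug R m)) -> commute n m.
Proof.
move=> nm; apply/commgP; have := nm _ (l2_delta 1%g) (n * m)%g.
by rewrite !lam_ug /= !mulKg mulVg eqxx => /esym/eqP; rewrite eqr_nat eqb1.
Qed.

Definition mul_ind (P : pred G) : op R := fun f x => (P x)%:R * f x.

Lemma bounded_mul_ind P : bounded (mul_ind P).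
Proof.
split=> [f f' c _ _ x|]; first by rewrite /mul_ind; ring.
exists 1 => f _ B fB s us; rewrite mul1r; apply: le_trans (fB s us).
apply: ler_sum => x _; rewrite /mul_ind; case: (P x); rewrite ?mul1r // mul0r normr0 expr0n.
by rewrite exprn_ge0.
Qed.

Lemma commute_mul_ind P n :
  (forall x, P (n^-1 * x)%g = P x) -> commute_l2 (mul_ind P) (lam (ug R n)).
Proof. by move=> Pn f _ x; rewrite /mul_ind !lam_ug Pn. Qed.

Lemma Mexo_ug_linG n : Mexo (lam (ug R n)) -> forall w, linG n w = w.
Proof.
move=> [_ nS]; apply: centralizes_embV_linG => w; apply: commute_of_commute_l2_ug.
exact: nS _ (commutant_Sexo_embV w).
Qed.

Lemma commutant_mul_inV N : (forall n, N n -> forall w, linG n w = w) ->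
  commutant (fun a => exists n, N n /\ a = ug R n) (mul_ind inV).
Proof.
move=> Nlin; split=> [|_ [n [Nn ->]]]; first exact: bounded_mul_ind.
rewrite star_ug; split; apply: commute_mul_ind => x; apply: inV_mull => w.
  by rewrite -{1}[w](Nlin n Nn) linGVK.
by rewrite invgK Nlin.
Qed.

Definition exo01 : galg R := gmul (ug R g01) (fgal R range_g01).

Lemma Sexo_exo01 : Sexo exo01.
Proof.
right; exists g01, range_g01.
by split; [exact: isGL_g01 | exact: uniq_range_g01 | exact: range_g01P |].
Qed.

(* Evaluate both sides on delta_1 at g01: the left side is 1/2, the right side
   vanishes because g01 is not in F_2^oo. *)
Lemma not_commute_exo01_mul_inV : ~ commute_l2 (lam exo01) (mul_ind inV).
Proof.
move=> /(_ _ (l2_delta 1%g) g01).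
rewrite /exo01 gmul_ug_fgal /mul_ind !lamE !big_map !big_cons !big_nil /=.
rewrite embV0 mulg1 mulVg invgM mulgVK invG_embV inV_g01 inV_embV embV_eq1.
have -> : ([fset 0%N] == fset0 :> vec) = false.
  by apply/eqP => /fsetP /(_ 0%N); rewrite !inE.
rewrite -embV0 inV_embV eqxx !mulr1 !mulr0 mul0r !addr0.
by move/eqP; rewrite invr_eq0 pnatr_eq0.
Qed.

Lemma Mexo_neq_LN N : ~ (forall T, Mexo T <-> LN R N T).
Proof.
move=> MN; have Nlin n : N n -> forall w, linG n w = w.
  by move=> Nn; apply/Mexo_ug_linG/MN/vNgen_lam; exists n.
have [_ exoN] : LN R N (lam exo01) by apply/MN/vNgen_lam/Sexo_exo01.
by apply: not_commute_exo01_mul_inV; apply/exoN/commutant_mul_inV.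
Qed.

End Operators.

Theorem lemma4p14 (R : realType) :
  [/\ (forall T : op R, Mexo T -> LG R T),
      (forall (g : G) (T : op R), Mexo T ->
          Mexo (fun f => lam (ug R g) (T (lam (ug R (invG g)) f)))) &
      (forall N : G -> Prop, normal_subgroup N ->
          ~ (forall T : op R, Mexo T <-> LN R N T))].
Proof.
split=> [T | g T | N _]; first exact: vNgen_LG.
  exact: Mexo_conj.
exact: Mexo_neq_LN.
Qed.
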